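(* Let $M$ be a finite set of graphs such that $M\cap\mathcal{S}=\emptyset$. Then there exists an integer $r\ge3$ such that $\mathcal{S}_r\subseteq \mathrm{SiFree}(M)$.
   Context: All graphs are finite and simple. For graphs $G_1=(V_1,E_1)$, $G_2=(V_2,E_2)$, $G_1\cap G_2=(V_1\cap V_2, E_1\cap E_2)$. For a graph $G=(V,E)$ and an injective map $\alpha$ on $V$, $G^{\alpha}$ has vertex set $\alpha(V)$ and edge set $\{\{\alpha(v),\alpha(w)\}: \{v,w\}\in E\}$. We write $G\xrightarrow{\cap} H$ if $H$ is (isomorphic to) $G^{\alpha_1}\cap\cdots\cap G^{\alpha_k}$ for some $k\ge1$ and injective maps $\alpha_1,\dots,\alpha_k$ on $V(G)$. For a set $M$ of graphs, $\mathrm{SiFree}(M)$ is the class of graphs $G$ such that $G\xrightarrow{\cap}F$ holds for no $F\in M$. $\mathcal{S}$ is the class of forests in which every connected component is a tree with at most three leaves (its members are called tripods). $H_0=K_{1,4}$, and for $k\ge1$, $H_k$ is the graph obtained from two vertex-disjoint copies of the path $P_3$ by joining their middle vertices by a path with $k$ edges (with $k-1$ new internal vertices). For $k\ge3$, $\mathcal{S}_k$ is the class of graphs containing none of $C_3,\dots,C_k,H_0,H_1,\dots,H_k$ as a (not necessarily induced) subgraph. *)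

From Stdlib Require List.
From mathcomp Require Import all_boot.
Set Implicit Arguments. Unset Strict Implicit. Unset Printing Implicit Defensive.

Record sgraph := FGraph {
  gV :> finType;
  gE : rel gV;
  gE_sym : symmetric gE;
  gE_irr : irreflexive gE }.

Definition symrel (T : finType) (r : rel T) : rel T :=
  fun x y => (x != y) && (r x y || r y x).

Lemma symrel_sym (T : finType) (r : rel T) : symmetric (symrel r).
Proof. by move=> x y; rewrite /symrel eq_sym orbC. Qed.

Lemma symrel_irr (T : finType) (r : rel T) : irreflexive (symrel r).
Proof. by move=> x; rewrite /symrel eqxx. Qed.

Definition mkgraph (T : finType) (r : rel T) : sgraph :=
  @FGraph T (symrel r) (@symrel_sym T r) (@symrel_irr T r).

(** Cycle C_n on vertices 0..n-1 (edges i -- i+1 mod n); a cycle for n >= 3. *)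
Definition Cgraph (n : nat) : sgraph :=
  mkgraph (fun i j : 'I_n => val j == (val i).+1 %% n).

(** H_0 = K_{1,4} (centre 0, leaves 1..4).
    H_k (k >= 1): path p_0 -- ... -- p_k on vertices 0..k, plus vertices
    k+1, k+2 adjacent to p_0 and k+3, k+4 adjacent to p_k; i.e. two copies of
    P_3 (k+1 -- 0 -- k+2 and k+3 -- k -- k+4) whose middle vertices are joined
    by a path with k edges. *)
Definition Hrel (k : nat) : rel 'I_(k + 5) :=
  fun i j =>
    match k with
    | 0 => (val i == 0) && (val j != 0)
    | _ => [|| (val j == (val i).+1) && (val j <= k),
               (val i == 0) && ((val j == k.+1) || (val j == k.+2)) |
               (val i == k) && ((val j == k.+3) || (val j == k.+4))]
    end.

Definition Hgraph (k : nat) : sgraph := mkgraph (@Hrel k).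

Definition contains_subgraph (G H : sgraph) : Prop :=
  exists f : H -> G, injective f /\
    forall x y : H, gE x y -> gE (f x) (f y).

(** G -(cap)-> H : H is isomorphic to G^{alpha_1} ∩ ... ∩ G^{alpha_k}, k >= 1,
    alpha_i injective maps of V(G) into a common universe U. *)
Definition si_to (G H : sgraph) : Prop :=
  exists (k : nat) (U : Type) (alpha : 'I_k -> G -> U),
    0 < k /\
    (forall i, injective (alpha i)) /\
    exists f : H -> U,
      injective f /\
      (forall u : U, (forall i, exists v : G, alpha i v = u) <-> exists x : H, f x = u) /\
      (forall x y : H,
          gE x y <-> forall i, exists v w : G, gE v w /\ alpha i v = f x /\ alpha i w = f y).

Definition SiFree (M : seq sgraph) (G : sgraph) : Prop :=
  forall F, List.In F M -> ~ si_to G F.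

(** The class S: forests every component of which is a tree with at most
    three leaves (vertices of degree 1). *)
Definition acyclic (G : sgraph) : Prop :=
  forall s : seq G, uniq s -> 2 < size s -> ~~ cycle (@gE G) s.

Definition deg (G : sgraph) (x : G) : nat := #|[set y | gE x y]|.

Definition tripod_forest (G : sgraph) : Prop :=
  acyclic G /\
  forall x : G, #|[set y | connect (@gE G) x y && (deg y == 1)]| <= 3.

Definition in_Sk (k : nat) (G : sgraph) : Prop :=
  (forall j, 3 <= j <= k -> ~ contains_subgraph G (Cgraph j)) /\
  (forall j, j <= k -> ~ contains_subgraph G (Hgraph j)).

(* A graph obtained from G by intersecting copies of G is in particular a
   subgraph of G, so it suffices that G contains none of finitely many small
   witnesses of non-membership in S.  A graph F outside S contains a cycle, or
   a vertex of degree at least 4 (giving H_0), or two vertices of degree at least 3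
   in one tree component, which together with a shortest path between them and
   two further neighbours of each end give some H_k.  Otherwise every
   component has at most three leaves: in a region of maximum degree 2 a walk
   from an end cannot branch, so it reaches at most one other end, and the
   leaves behind the unique vertex of degree 3 inject into its neighbours.
   All these witnesses have at most |F| vertices, so r = max |F| + 3 works. *)

From Stdlib Require List.
From Stdlib Require Import ClassicalEpsilon Classical.
From mathcomp Require Import all_boot.
Set Implicit Arguments. Unset Strict Implicit. Unset Printing Implicit Defensive.

Lemma contains_subgraph_trans (A B C : sgraph) :
  contains_subgraph A B -> contains_subgraph B C -> contains_subgraph A C.
Proof.
move=> [f [f_inj f_edge]] [g [g_inj g_edge]]; exists (f \o g); split.
- exact: inj_comp.
- by move=> x y /g_edge /f_edge.
Qed.

Lemma contains_subgraph_card (A B : sgraph) :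
  contains_subgraph A B -> #|B| <= #|A|.
Proof. by move=> [f [f_inj _]]; exact: leq_card f_inj. Qed.

(* Any single map [alpha i] identifies H with a subgraph of G. *)
Lemma si_to_contains_subgraph (G H : sgraph) : si_to G H -> contains_subgraph G H.
Proof.
move=> [k [U [alpha [k_gt0 [alpha_inj [f [f_inj [f_onto f_edge]]]]]]]].
pose i0 := Ordinal k_gt0.
have pre x : exists v : G, alpha i0 v = f x by apply: (proj2 (f_onto (f x))); exists x.
pose g x := proj1_sig (constructive_indefinite_description _ (pre x)).
have gP x : alpha i0 (g x) = f x by rewrite /g; case: constructive_indefinite_description.
exists g; split.
- by move=> x y gxy; apply: f_inj; rewrite -!gP gxy.
- move=> x y /f_edge /(_ i0) [v [w [vw [fxv fyw]]]].
  have -> : g x = v by apply: (alpha_inj i0); rewrite gP fxv.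
  by have -> : g y = w by apply: (alpha_inj i0); rewrite gP fyw.
Qed.

Lemma cycle_contains_Cgraph (F : sgraph) (s : seq F) :
  uniq s -> 2 < size s -> cycle (@gE F) s -> contains_subgraph F (Cgraph (size s)).
Proof.
case: s => [//|x0 s'] s_uniq _ s_cycle; set s := x0 :: s' in s_uniq s_cycle *.
have step i : i < size s -> gE (nth x0 s i) (nth x0 s (i.+1 %% size s)).
  move=> lt_i_s; move/(pathP x0): s_cycle => /(_ i); rewrite size_rcons => /(_ lt_i_s).
  rewrite -rcons_cons !nth_rcons lt_i_s /= if_same.
  have [lt_i_s'|ge_i_s'] := ltnP i (size s'); first by rewrite modn_small.
  have -> : i = size s' by apply/eqP; rewrite eqn_leq ge_i_s' andbT -ltnS.
  by rewrite modnn.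
exists (fun i : 'I_(size s) => nth x0 s i); split.
- by move=> i j /eqP; rewrite nth_uniq // => /eqP /val_inj.
- move=> i j /andP [_ /orP [] /eqP ->]; first exact: step.
  by rewrite gE_sym; apply: step.
Qed.

Definition nbhd (T : finType) (e : rel T) (x : T) : {set T} := [set y | e x y].

Lemma card_nbhd_gt1 (T : finType) (e : rel T) x y1 y2 :
  e x y1 -> e x y2 -> y1 != y2 -> 1 < #|nbhd e x|.
Proof. by move=> ? ? ?; apply/card_gt1P; exists y1, y2; rewrite !inE. Qed.

Lemma card_nbhd_gt2 (T : finType) (e : rel T) x y1 y2 y3 :
  e x y1 -> e x y2 -> e x y3 -> uniq [:: y1; y2; y3] -> 2 < #|nbhd e x|.
Proof.
move=> ? ? ? ?; apply/card_geqP; exists [:: y1; y2; y3]; split => //.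
by move=> z; rewrite !inE => /or3P [] /eqP ->.
Qed.

Section DegreeTwoPaths.
Variables (T : finType) (e : rel T).
Hypothesis e_sym : symmetric e.

(* Through vertices of degree at most 2, a simple path that never turns back
   has no choice but to continue, so two such paths from x leaving x in the
   same direction (away from w) are prefixes of each other. *)
Lemma path_prefix_deg2 w x p q :
  (forall y z, e x y -> e x z -> y != w -> z != w -> y = z) ->
  path e x p -> path e x q -> uniq (x :: p) -> uniq (x :: q) ->
  w \notin p -> w \notin q -> (forall v, v \in p -> #|nbhd e v| <= 2) ->
  prefix p q || prefix q p.
Proof.
elim: p w x q => [|y p IH] w x [|z q] //= x_det /andP [xy yp] /andP [xz zq].
rewrite !inE !negb_or => /andP [/andP [_ x_p] up] /andP [/andP [_ x_q] uq].
move=> /andP [yw wp] /andP [zw wq] deg2.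
have yz : y = z by apply: x_det; rewrite 1?eq_sym.
subst z; rewrite eqxx /=; apply: (IH x y) => // [y1 z1 yy1 yz1 y1x z1x|v vp].
- apply/eqP/negPn/negP => y1z1; have := deg2 y (mem_head _ _).
  rewrite leqNgt (card_nbhd_gt2 (y1 := x) (y2 := y1) (y3 := z1)) //; first by rewrite e_sym.
  by rewrite /= !inE negb_or y1z1 eq_sym y1x eq_sym z1x.
- by apply: deg2; rewrite inE vp orbT.
Qed.

Lemma path_inner_card_nbhd_gt1 a p z r :
  path e a (p ++ z :: r) -> uniq (a :: p ++ z :: r) -> p != [::] ->
  1 < #|nbhd e (last a p)|.
Proof.
case/lastP: p => [//|p b] ap ua _; rewrite last_rcons.
move: ap; rewrite cat_path rcons_path last_rcons /= => /andP [/andP [_ e1] /andP [e2 _]].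
apply: (card_nbhd_gt1 (y1 := last a p) (y2 := z)) => //; first by rewrite e_sym.
apply/eqP => zE; move: ua; rewrite -cat_cons cat_uniq => /and3P [_ /hasPn/(_ z)].
by rewrite mem_head -zE -rcons_cons mem_rcons inE mem_last orbT => /(_ isT).
Qed.

Lemma path_connect x p v : path e x p -> v \in p -> connect e x v.
Proof.
elim: p x => [//|y p IH] x /= /andP [xy yp]; rewrite inE => /predU1P [->|vp].
  exact: connect1.
exact: connect_trans (connect1 xy) (IH _ yp vp).
Qed.

Lemma deg2_component_ends a b d :
  (forall v, connect e a v -> #|nbhd e v| <= 2) ->
  #|nbhd e a| <= 1 -> #|nbhd e b| <= 1 -> #|nbhd e d| <= 1 ->
  connect e a b -> connect e a d -> a != b -> a != d -> b = d.
Proof.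
move=> deg2 da db dd /connectP [p0 ap0 eb] /connectP [q0 aq0 ed]; subst b d.
case: (shortenP ap0) db => p ap up _ db {ap0}.
case: (shortenP aq0) dd => q aq uq _ dd {aq0}.
have a_det y z : e a y -> e a z -> y != a -> z != a -> y = z.
  move=> ay az _ _; move/card_le1P: da => /(_ y); rewrite inE => /(_ ay z).
  by rewrite !inE az => /esym /eqP.
have a_p : a \notin p by case/andP: up.
have a_q : a \notin q by case/andP: uq.
have deg2p v : v \in p -> #|nbhd e v| <= 2 by move=> vp; apply/deg2/(path_connect ap).
have /orP [/prefixP [r qE]|/prefixP [r pE]] := path_prefix_deg2 a_det ap aq up uq a_p a_q deg2p.
- subst q; case: r aq uq dd {a_q} => [|z r] aq uq dd ab _; first by rewrite cats0.
  have p_nil : p != [::] by apply: contraNneq ab => ->.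
  by have := path_inner_card_nbhd_gt1 aq uq p_nil; rewrite ltnNge db.
- subst p; case: r ap up db {a_p deg2p} => [|z r] ap up db _ ad; first by rewrite cats0.
  have q_nil : q != [::] by apply: contraNneq ad => ->.
  by have := path_inner_card_nbhd_gt1 ap up q_nil; rewrite ltnNge dd.
Qed.
End DegreeTwoPaths.

Lemma connect_nbhd0 (T : finType) (e : rel T) x v :
  #|nbhd e x| = 0 -> connect e x v -> v = x.
Proof.
move/eqP; rewrite cards_eq0 => /eqP nb0 /connectP [[|y p] //= /andP [xy _] _].
by have := in_set0 y; rewrite -nb0 inE xy.
Qed.

Section AvoidVertex.
Variables (T : finType) (e : rel T) (c : T).

Definition avoid : rel T := fun x y => [&& e x y, x != c & y != c].

Lemma avoid_sym : symmetric e -> symmetric avoid.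
Proof. by move=> e_sym x y; rewrite /avoid e_sym [(x != c) && _]andbC. Qed.

Lemma connect_avoid_neq x v : x != c -> connect avoid x v -> v != c.
Proof.
move=> xc /connectP [p xp ->]; elim: p x xc xp => //= y p IH x _ /andP [/and3P [_ _ yc]].
exact: IH.
Qed.

Lemma connect_avoid_sub x v : connect avoid x v -> connect e x v.
Proof. by apply: connect_sub => y z /andP [yz _]; apply: connect1. Qed.

Lemma card_nbhd_avoid v : #|nbhd avoid v| <= #|nbhd e v|.
Proof. by apply/subset_leq_card/subsetP => z; rewrite !inE => /andP []. Qed.

Lemma card_nbhd_avoid_lt v : e v c -> #|nbhd avoid v| < #|nbhd e v|.
Proof.
move=> vc; rewrite (cardsD1 c (nbhd e v)) inE vc add1n ltnS.
by apply/subset_leq_card/subsetP => z; rewrite !inE => /and3P [-> _ ->].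
Qed.

Lemma connect_avoid_from l : c != l -> connect e c l -> exists2 n, e c n & connect avoid n l.
Proof.
move=> cl /connectP [p0 cp0 lE]; case: (shortenP cp0) lE => p cp up _ lE {cp0}.
case: p cp up lE => [|n p] /= cp up lE; first by rewrite lE eqxx in cl.
case/andP: cp => cn np; exists n => //; apply/connectP; exists p => //.
apply: (sub_in_path (P := predC1 c)) np => [y z yc zc yz|]; first exact/and3P.
case/andP: up => c_np _; apply/allP => y yp /=.
by apply: contraNneq c_np => <-.
Qed.

End AvoidVertex.

Definition comp_leaves (F : sgraph) (x : F) : {set F} :=
  [set y | connect (@gE F) x y && (deg y == 1)].

Section Leaves.
Variables (F : sgraph) (x : F).

Let connect_sym_gE : connect_sym (@gE F) := sym_connect_sym (@gE_sym F).

Lemma comp_leavesP l : l \in comp_leaves x -> connect (@gE F) x l /\ deg l = 1.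
Proof. by rewrite inE => /andP [? /eqP]. Qed.

Lemma comp_leaves_deg2 :
  (forall y, connect (@gE F) x y -> deg y <= 2) -> #|comp_leaves x| <= 2.
Proof.
move=> deg2; rewrite leqNgt; apply/negP => /card_geqP [s [us ss s_leaves]].
case: s us ss s_leaves => [|l1 [|l2 [|l3 [|//]]]] //= us _ s_leaves.
have [xl1 dl1] := comp_leavesP (s_leaves l1 (mem_head _ _)).
have [xl2 dl2] : connect (@gE F) x l2 /\ deg l2 = 1.
  by apply/comp_leavesP/s_leaves; rewrite !inE eqxx orbT.
have [xl3 dl3] : connect (@gE F) x l3 /\ deg l3 = 1.
  by apply/comp_leavesP/s_leaves; rewrite !inE eqxx !orbT.
have l1_x v : connect (@gE F) x v -> connect (@gE F) l1 v.
  by apply: connect_trans; rewrite connect_sym_gE.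
move: us; rewrite !inE !negb_or -!andbA => /and4P [l12 l13 l23 _].
have l2l3 : l2 = l3.
  apply: (deg2_component_ends (@gE_sym F) (a := l1)); rewrite -?/(deg _) ?dl1 ?dl2 ?dl3 //.
  - by move=> v /(connect_trans xl1); apply: deg2.
  - exact: l1_x.
  - exact: l1_x.
by rewrite l2l3 eqxx in l23.
Qed.

Variable c : F.
Hypothesis x_c : connect (@gE F) x c.
Hypothesis deg2_off_c : forall y, connect (@gE F) x y -> y != c -> deg y <= 2.

Lemma branch_leaf_unique n l l' :
  gE c n -> l \in comp_leaves x -> l' \in comp_leaves x ->
  connect (avoid (@gE F) c) n l -> connect (avoid (@gE F) c) n l' -> l = l'.
Proof.
move=> cn /comp_leavesP [_ dl] /comp_leavesP [_ dl'] nl nl'.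
have n_c : n != c by apply: contraTneq cn => ->; rewrite gE_irr.
have x_n : connect (@gE F) x n := connect_trans x_c (connect1 cn).
have avoid_deg_lt v : gE c v -> #|nbhd (avoid (@gE F) c) v| < deg v.
  by move=> cv; apply: card_nbhd_avoid_lt; rewrite gE_sym.
have dn : #|nbhd (avoid (@gE F) c) n| <= 1.
  by rewrite -ltnS (leq_trans (avoid_deg_lt _ cn)) // deg2_off_c.
have leaf_avoid v : deg v = 1 -> #|nbhd (avoid (@gE F) c) v| <= 1.
  by move=> dv; rewrite -dv card_nbhd_avoid.
have [ln|ln] := eqVneq n l.
  subst l; apply: esym (connect_nbhd0 _ nl'); apply/eqP.
  by rewrite -leqn0 -ltnS -dl avoid_deg_lt.
have [l'n|l'n] := eqVneq n l'.
  subst l'; apply: connect_nbhd0 nl; apply/eqP.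
  by rewrite -leqn0 -ltnS -dl' avoid_deg_lt.
apply: (deg2_component_ends (avoid_sym c (@gE_sym F)) _ dn) => //; try exact: leaf_avoid.
move=> v nv; apply: leq_trans (card_nbhd_avoid _ _ _) _.
apply: deg2_off_c; last exact: connect_avoid_neq nv.
exact: connect_trans x_n (connect_avoid_sub nv).
Qed.

Lemma comp_leaves_branch : 1 < deg c -> #|comp_leaves x| <= deg c.
Proof.
move=> dc.
have leaf_c l : l \in comp_leaves x -> c != l.
  by move=> /comp_leavesP [_ dl]; apply: contraTneq dc => ->; rewrite dl.
have branch l : l \in comp_leaves x ->
    exists2 n, gE c n & connect (avoid (@gE F) c) n l.
  move=> lx; apply: connect_avoid_from (leaf_c l lx) _.
  by apply: connect_trans (comp_leavesP lx).1; rewrite connect_sym_gE.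
pose f l := odflt c [pick n | gE c n && connect (avoid (@gE F) c) n l].
have fP l : l \in comp_leaves x -> gE c (f l) && connect (avoid (@gE F) c) (f l) l.
  move=> lx; rewrite /f; case: pickP => [n //|none].
  by have [n cn nl] := branch l lx; have := none n; rewrite cn nl.
rewrite -(card_in_imset (f := f)) => [|l l' lx l'x fll'].
  by apply/subset_leq_card/subsetP => _ /imsetP [l /fP /andP [cn _] ->]; rewrite inE.
have /andP [cn nl] := fP l lx; have /andP [_ nl'] := fP l' l'x.
by apply: (branch_leaf_unique cn) => //; rewrite fll'.
Qed.
End Leaves.

Lemma comp_leaves_le3 (F : sgraph) (x : F) :
  (forall y, connect (@gE F) x y -> deg y <= 3) ->
  (forall y z, connect (@gE F) x y -> connect (@gE F) x z -> 2 < deg y -> 2 < deg z -> y = z) ->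
  #|comp_leaves x| <= 3.
Proof.
move=> deg3 branch_uniq.
case: (pickP [pred c | connect (@gE F) x c && (2 < deg c)]) => [c /andP [xc dc]|none].
  apply: leq_trans (comp_leaves_branch xc _ (ltnW dc)) (deg3 c xc) => y xy.
  by rewrite leqNgt; apply: contra => dy; apply/eqP/branch_uniq.
apply: leq_trans (comp_leaves_deg2 _) _ => // y xy.
by have := none y; rewrite /= xy /= ltnNge => /negbFE.
Qed.

Lemma deg_gt3_contains_H0 (F : sgraph) (y : F) : 3 < deg y -> contains_subgraph F (Hgraph 0).
Proof.
move=> /card_geqP [s [us ss s_nbhd]].
have ys : y \notin s by apply/negP => /s_nbhd; rewrite inE gE_irr.
have uS : uniq (y :: s) by rewrite /= ys us.
exists (fun i : 'I_(0 + 5) => nth y (y :: s) i); split.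
  by move=> i j /eqP; rewrite nth_uniq /= ?ss // => /eqP /val_inj.
have edge (i j : 'I_(0 + 5)) : Hrel i j -> gE (nth y (y :: s) i) (nth y (y :: s) j).
  case: i j => [i lti] [[|j] ltj]; rewrite /Hrel /= => /andP [/eqP -> //] _.
  have /s_nbhd : nth y s j \in s by rewrite mem_nth // ss -ltnS.
  by rewrite inE.
by move=> i j /andP [_ /orP [/edge //|/edge]]; rewrite gE_sym.
Qed.

Lemma seq_contains_Hgraph (F : sgraph) (k : nat) (S : seq F) (x0 : F) :
  uniq S -> size S = k.+1 + 5 ->
  (forall i, i < k.+1 -> gE (nth x0 S i) (nth x0 S i.+1)) ->
  gE (nth x0 S 0) (nth x0 S k.+2) -> gE (nth x0 S 0) (nth x0 S k.+3) ->
  gE (nth x0 S k.+1) (nth x0 S k.+4) -> gE (nth x0 S k.+1) (nth x0 S k.+4.+1) ->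
  contains_subgraph F (Hgraph k.+1).
Proof.
move=> uS sS S_path e2 e3 e4 e5.
exists (fun i : 'I_(k.+1 + 5) => nth x0 S i); split.
  by move=> i j /eqP; rewrite nth_uniq ?sS // => /eqP /val_inj.
have edge (i j : 'I_(k.+1 + 5)) : Hrel i j -> gE (nth x0 S i) (nth x0 S j).
  case: i j => [i lti] [j ltj] /or3P
    [/andP [/eqP /= -> jk] | /andP [/eqP -> /orP [] /eqP ->] | /andP [/eqP -> /orP [] /eqP ->]] //.
  exact: S_path.
by move=> i j /andP [_ /orP [/edge //|/edge]]; rewrite gE_sym.
Qed.

Section Geodesics.
Variables (T : finType) (e : rel T).

Definition geodesic (x : T) (p : seq T) : Prop :=
  path e x p /\ forall q, path e x q -> last x q = last x p -> size p <= size q.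

Lemma connect_geodesic x y :
  connect e x y -> exists p, [/\ geodesic x p, uniq (x :: p) & last x p = y].
Proof.
move=> xy; pose P n := [exists t : n.-tuple T, path e x t && (last x t == y)].
have exP : exists n, P n.
  case/connectP: xy => p xp yE; exists (size p); apply/existsP; exists (in_tuple p).
  by rewrite xp yE eqxx.
case: (ex_minnP exP) => k /existsP [t /andP [xt /eqP yE]] k_min.
have min_k q : path e x q -> last x q = y -> k <= size q.
  by move=> xq yq; apply: k_min; apply/existsP; exists (in_tuple q); rewrite xq yq eqxx.
case: (shortenP xt) yE => p xp up p_sub yE.
have size_p : size p = k.
  apply/eqP; rewrite eqn_leq min_k // andbT -(size_tuple t).
  by apply: uniq_leq_size p_sub; case/andP: up.
by exists p; split=> //; split=> // q xq; rewrite size_p yE; apply: min_k.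
Qed.

Lemma geodesic_nbhd x p a : geodesic x p -> e x a -> a \in p -> a = head x p.
Proof.
move=> [xp p_min] xa ap; case/splitPr: ap xp p_min => pl pr xp p_min.
have := p_min (a :: pr); rewrite /= xa last_cat /=.
move: xp; rewrite cat_path => /andP [_ /= /andP [_ ->]] /(_ isT erefl).
rewrite size_cat /= addnS ltnS -{2}(add0n (size pr)) leq_add2r leqn0.
by case: pl {p_min}.
Qed.

Hypothesis e_sym : symmetric e.

Lemma geodesic_rev x p :
  geodesic x p -> geodesic (last x p) (rev (belast x p)) /\ last (last x p) (rev (belast x p)) = x.
Proof.
have rev_path y q : path e y q -> path e (last y q) (rev (belast y q)).
  by move=> yq; rewrite rev_path; apply: sub_path yq => z w; rewrite /= e_sym.
have last_rev y q : last (last y q) (rev (belast y q)) = y.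
  by case: q => [//|z q] /=; rewrite rev_cons last_rcons.
move=> [xp p_min]; split=> //; split; first exact: rev_path.
move=> q vq; rewrite last_rev size_rev size_belast => qE.
have := p_min (rev (belast (last x p) q)); rewrite size_rev size_belast; apply.
  by rewrite -{1}qE; apply: rev_path.
by rewrite -{1}qE last_rev.
Qed.
End Geodesics.

Lemma geodesic_off_nbhd (F : sgraph) (x : F) p :
  geodesic (@gE F) x p -> p != [::] -> 2 < deg x ->
  exists a b, [/\ gE x a, gE x b, a != b, a \notin x :: p & b \notin x :: p].
Proof.
move=> xp p_nil dx.
have x_head : gE x (head x p) by case: p p_nil xp => [//|y p] _ [/= /andP []].
have off w : w \in nbhd (@gE F) x :\ head x p -> w \notin x :: p.
  rewrite !inE negb_or => /andP [wh xw]; apply/andP; split.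
    by apply: contraTneq xw => ->; rewrite gE_irr.
  by apply: contra wh => wp; rewrite (geodesic_nbhd xp xw wp).
have /card_gt1P [a [b [ha hb ab]]] : 1 < #|nbhd (@gE F) x :\ head x p|.
  by move: dx; rewrite /deg (cardsD1 (head x p)) inE x_head.
exists a, b; split; rewrite ?off //.
- by move: ha; rewrite !inE => /andP [].
- by move: hb; rewrite !inE => /andP [].
Qed.

Lemma acyclic_path_closing (F : sgraph) (u w : F) p :
  acyclic F -> path (@gE F) u p -> uniq (u :: p) -> p != [::] ->
  gE (last u p) w -> gE w u -> w \notin u :: p -> False.
Proof.
move=> acF up u_uniq p_nil pw wu w_p.
have s_uniq : uniq (u :: rcons p w) by rewrite -rcons_cons rcons_uniq w_p.
have s_size : 2 < size (u :: rcons p w).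
  by rewrite /= size_rcons; case: p p_nil {up u_uniq pw w_p s_uniq}.
move/negP: (acF _ s_uniq s_size); apply.
by rewrite /cycle !rcons_path last_rcons up pw wu.
Qed.

Lemma branch_pair_contains_Hgraph (F : sgraph) (u v : F) :
  acyclic F -> u != v -> connect (@gE F) u v -> 2 < deg u -> 2 < deg v ->
  exists k, contains_subgraph F (Hgraph k).
Proof.
move=> acF uv /connect_geodesic [p [gp up vE]] du dv.
have p_nil : p != [::] by apply: contraNneq uv => pE; rewrite -vE pE.
have [gs uE] := geodesic_rev (@gE_sym F) gp; rewrite vE in gs uE.
have s_nil : rev (belast u p) != [::] by rewrite -size_eq0 size_rev size_belast size_eq0.
have mem_s w : (w \in v :: rev (belast u p)) = (w \in u :: p).
  by rewrite [u :: p]lastI mem_rcons !in_cons mem_rev vE.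
have [a [b [ua ub ab a_p b_p]]] := geodesic_off_nbhd gp p_nil du.
have [c [d [vc vd cd]]] := geodesic_off_nbhd gs s_nil dv; rewrite !mem_s => c_p d_p.
have apart w w' : gE u w -> gE v w' -> w \notin u :: p -> w != w'.
  move=> uw vw' w_p; apply/eqP => ww'; subst w'.
  by apply: (acyclic_path_closing acF gp.1 up p_nil _ _ w_p); rewrite ?vE // gE_sym.
have S_uniq : uniq ((u :: p) ++ [:: a; b; c; d]).
  rewrite cat_uniq up; apply/and3P; split=> //.
    by apply/hasPn => w; rewrite !inE => /or4P [] /eqP ->.
  by rewrite /= !inE !negb_or ab cd !apart.
clear mem_s gs uE s_nil apart a_p b_p c_p d_p.
case: p p_nil gp up vE S_uniq => [//|p1 p'] _ [up_path _] _ vE S_uniq.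
exists (size p').+1; set S := _ ++ _ in S_uniq.
have nth_end j : nth u S (j + (size p').+2) = nth u [:: a; b; c; d] j.
  by rewrite nth_cat /= ltnNge leq_addl /= addnK.
have nth_v : nth u S (size p').+1 = v by rewrite nth_cat /= ltnSn -vE -nth_last.
apply: (seq_contains_Hgraph (x0 := u) S_uniq).
- by rewrite size_cat /= !addSn !addnS.
- move=> i lti; rewrite /S !nth_cat /= (leqW lti) ltnS lti.
  by move/pathP: up_path => /(_ u i lti).
- by rewrite -[(size p').+2]add0n nth_end.
- by rewrite -[(size p').+3]/(1 + (size p').+2) nth_end.
- by rewrite nth_v -[(size p').+4]/(2 + (size p').+2) nth_end.
- by rewrite nth_v -[(size p').+4.+1]/(3 + (size p').+2) nth_end.
Qed.

Lemma not_tripod_forest_contains (F : sgraph) : ~ tripod_forest F ->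
  (exists2 j, 3 <= j & contains_subgraph F (Cgraph j)) \/
  (exists j, contains_subgraph F (Hgraph j)).
Proof.
move=> notS; case: (classic (acyclic F)) => [acF|cycF]; last first.
  have [s [us ss cs]] : exists s : seq F, [/\ uniq s, 2 < size s & cycle (@gE F) s].
    by apply: NNPP => none; apply: cycF => s us ss; apply/negP => cs; apply: none; exists s.
  by left; exists (size s) => //; apply: cycle_contains_Cgraph.
have [x x_leaves] : exists x : F, 3 < #|comp_leaves x|.
  apply: NNPP => none; apply: notS; split=> // x.
  by rewrite leqNgt; apply/negP => lx; apply: none; exists x.
right; case: (pickP [pred y | connect (@gE F) x y && (3 < deg y)]) => [y /andP [_ dy]|deg3].
  by exists 0; apply: deg_gt3_contains_H0 dy.
case: (pickP [pred yz : F * F | [&& connect (@gE F) x yz.1, connect (@gE F) x yz.2,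
    2 < deg yz.1, 2 < deg yz.2 & yz.1 != yz.2]]) => [[y z] /and5P [xy xz dy dz yz]|branch1].
  apply: (branch_pair_contains_Hgraph acF yz) => //; apply: connect_trans xz.
  by rewrite (sym_connect_sym (@gE_sym F)).
move: x_leaves; rewrite ltnNge comp_leaves_le3 // => [y xy|y z xy xz dy dz].
  by have := deg3 y; rewrite /= xy /= ltnNge => /negbFE.
by apply/eqP; have := branch1 (y, z); rewrite /= xy xz dy dz /= => /negbFE.
Qed.

Lemma card_bound_In (M : seq sgraph) : exists N, forall F, List.In F M -> #|F| <= N.
Proof.
elim: M => [|F M [N FN]]; first by exists 0.
exists (maxn #|F| N) => G /= [<-|/FN GN]; first exact: leq_maxl.
exact: leq_trans GN (leq_maxr _ _).
Qed.

Theorem mainTheorem12 (M : seq sgraph) :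
  (forall F, List.In F M -> ~ tripod_forest F) ->
  exists r : nat, 3 <= r /\ forall G : sgraph, in_Sk r G -> SiFree M G.
Proof.
move=> notS; have [N MN] := card_bound_In M.
exists (N + 3); split; first exact: leq_addl.
move=> G [noC noH] F FM /si_to_contains_subgraph GF.
have F_r : #|F| <= N + 3 by apply: leq_trans (MN F FM) (leq_addr 3 N).
case: (not_tripod_forest_contains (notS F FM)) => [[j j3 Fj]|[j Fj]].
- apply: (noC j); last exact: contains_subgraph_trans GF Fj.
  have : #|'I_j| <= #|F| := contains_subgraph_card Fj.
  by rewrite card_ord j3 => /leq_trans; apply.
- apply: (noH j); last exact: contains_subgraph_trans GF Fj.
  have : #|'I_(j + 5)| <= #|F| := contains_subgraph_card Fj.
  by rewrite card_ord => /(leq_trans (leq_addr 5 j)) /leq_trans; apply.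
Qed.
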